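(* Let $G$ be a graph and let $\mathcal R=\{G_v: v\in V(G)\}$ be a family of pairwise vertex-disjoint graphs. Then $$\gamma_{gr}(G\hookleftarrow \mathcal R)=\max \left\{\gamma_{gr}(G,I)+\sum_{v\in I} \gamma_{gr}(G_v)-|I| \;:\; I \text{ is an independent set of } G\right\}.$$
   Context: All graphs are finite and simple; $N[v]$ denotes the closed neighborhood. The $X$-join product $G\hookleftarrow \mathcal R$ has vertex set $\bigcup_{v\in V(G)}V(G_v)$, the edges of all $G_v$, and all edges between $V(G_u)$ and $V(G_v)$ whenever $uv\in E(G)$. For a sequence $S=(v_1,\dots,v_k)$ of distinct vertices, $\widehat S=\{v_1,\dots,v_k\}$, $|S|=k$, and $PN_S(v_i)=N[v_i]\setminus\bigcup_{j<i}N[v_j]$. $S$ is a legal dominating sequence of $G$ if $\widehat S$ is a dominating set and $PN_S(v_i)\neq\emptyset$ for all $i$; $\mathcal L(G)$ is the set of these. $\gamma_{gr}(G)$ (Grundy domination number) is the maximum length of a legal dominating sequence. For $S\in\mathcal L(G)$, the footprinter $f_S(x)$ of $x$ is the unique $v\in\widehat S$ with $x\in PN_S(v)$, and $I_S=\{v: f_S(v)=v\}$. For an independent set $I$, $\mathcal L(G,I)=\{S\in\mathcal L(G): I_S=I\}$ and $\gamma_{gr}(G,I)=\max\{|S|:S\in\mathcal L(G,I)\}$, where the maximum of the empty set is $-\infty$. *)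

(* Graphs: symmetric irreflexive relations on finTypes. *)
From mathcomp Require Import all_boot all_order all_algebra.
Set Implicit Arguments. Unset Strict Implicit. Unset Printing Implicit Defensive.

Section Grundy.
Variables (T : finType) (e : rel T).

Definition cnbhd (v : T) : {set T} := [set u | (u == v) || e v u].

Definition pnS (s : seq T) (v : T) : {set T} :=
  cnbhd v :\: \bigcup_(u <- take (index v s) s) cnbhd u.

Definition dominating (D : pred T) : bool :=
  [forall x, [exists v, (v \in D) && (x \in cnbhd v)]].

Definition legal (s : seq T) : bool :=
  [&& uniq s, dominating (mem s) & all (fun v => pnS s v != set0) s].

(* I_S = { v : f_S(v) = v } = { v in S : v \in PN_S(v) } *)
Definition IS (s : seq T) : {set T} := [set v | (v \in s) && (v \in pnS s v)].

Definition independent (I : {set T}) : bool :=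
  [forall x in I, forall y in I, ~~ e x y].

(* Grundy domination number (legal sequences are uniq, so length <= #|T|) *)
Definition gamma_gr : nat :=
  \max_(n < #|T|.+1 | [exists t : n.-tuple T, legal t]) n.

Definition LI_nonempty (I : {set T}) : bool :=
  [exists n : 'I_#|T|.+1, [exists t : n.-tuple T, legal t && (IS t == I)]].

(* gamma_gr(G,I), meaningful when LI_nonempty I (otherwise -oo) *)
Definition gamma_grI (I : {set T}) : nat :=
  \max_(n < #|T|.+1 | [exists t : n.-tuple T, legal t && (IS t == I)]) n.

End Grundy.

(* X-join product: vertex set is the disjoint union {v : T & Tv v} *)
Definition join_rel (T : finType) (e : rel T) (Tv : T -> finType)
  (ev : forall v, rel (Tv v)) : rel {v : T & Tv v} :=
  fun a b => if tag a == tag b then ev (tag a) (tagged a) (tagged_as a b)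
             else e (tag a) (tag b).

(* Lower bound: take S in L(G, I) of maximum length and replace every v in I
   by a Grundy sequence of G_v and every other v of S by a single vertex of
   G_v.  A vertex v of I footprints itself in S, so no earlier vertex of the
   product sees the copy of v, and each other v footprints a neighbour w whose
   whole copy is still undominated; the result is a legal sequence.

   Upper bound: in a Grundy sequence S of the product, map every x to a vertex
   phi x of G whose copy receives a footprint of x (tag x when possible).  The
   vertices of G of the first members of the phi-classes form a sequence of G
   in which every vertex footprints phi of its member.  A class with at least
   two members belongs to a vertex t that footprints itself there, and the
   members of the class project to a sequence of G_t in which every vertex
   footprints, so the class has at most gamma_gr(G_t) members.  Extending
   that sequence of G to a legal one only enlarges its set I_S. *)

From mathcomp Require Import all_boot all_order all_algebra zify.
Set Implicit Arguments. Unset Strict Implicit. Unset Printing Implicit Defensive.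

Lemma take_index_cat_cons (A : eqType) (p q : seq A) x :
  x \notin p -> take (index x (p ++ x :: q)) (p ++ x :: q) = p.
Proof. by move=> xNp; rewrite index_cat (negbTE xNp) /= eqxx addn0 take_size_cat. Qed.

Lemma uniq_cat_cons_notin (A : eqType) (p q : seq A) x : uniq (p ++ x :: q) -> x \notin p.
Proof. by rewrite cat_uniq /= => /and3P[_ /norP[]]. Qed.

Lemma mem_cat_cons (A : eqType) (p q : seq A) x : x \in p ++ x :: q.
Proof. by rewrite mem_cat inE eqxx orbT. Qed.

Lemma size_eq_sum_count (A : eqType) (B : finType) (f : A -> B) (s : seq A) :
  size s = \sum_b count (fun x => f x == b) s.
Proof.
rewrite -sum1_size (partition_big f predT) //.
by apply: eq_bigr => b _; rewrite sum1_count.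
Qed.

Lemma split_mem (A : eqType) (x : A) (s : seq A) :
  x \in s -> exists p q, s = p ++ x :: q.
Proof. by case/splitPr => p q; exists p, q. Qed.

Lemma split_first (A : eqType) (P : pred A) (s : seq A) :
  has P s -> exists p x q, [/\ s = p ++ x :: q, P x & ~~ has P p].
Proof. by case/split_find => x p q Px NPp; exists p, x, q; rewrite cat_rcons. Qed.

Section LegalSequences.
Variables (T : finType) (e : rel T).

Definition cnbhds (s : seq T) : {set T} := \bigcup_(u <- s) cnbhd e u.

Fixpoint legal_from (D : {set T}) (s : seq T) : bool :=
  if s is v :: s' then (cnbhd e v :\: D != set0) && legal_from (D :|: cnbhd e v) s'
  else true.

Lemma in_cnbhd u v : (u \in cnbhd e v) = (u == v) || e v u.
Proof. by rewrite inE. Qed.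

Lemma cnbhd_refl v : v \in cnbhd e v.
Proof. by rewrite in_cnbhd eqxx. Qed.

Lemma mem_cnbhds z s : (z \in cnbhds s) = has (fun u => z \in cnbhd e u) s.
Proof.
elim: s => [|u s IHs]; first by rewrite /cnbhds big_nil inE.
by rewrite /cnbhds big_cons inE -/(cnbhds s) IHs.
Qed.

Lemma cnbhds_nil : cnbhds [::] = set0.
Proof. by rewrite /cnbhds big_nil. Qed.

Lemma cnbhds_seq1 u : cnbhds [:: u] = cnbhd e u.
Proof. by rewrite /cnbhds big_seq1. Qed.

Lemma cnbhds_cat s t : cnbhds (s ++ t) = cnbhds s :|: cnbhds t.
Proof. by rewrite /cnbhds big_cat. Qed.

Lemma legal_from_cat D s t :
  legal_from D (s ++ t) = legal_from D s && legal_from (D :|: cnbhds s) t.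
Proof.
elim: s D => [|v s IHs] D /=; first by rewrite cnbhds_nil setU0.
by rewrite IHs -andbA -setUA -cnbhds_seq1 -cnbhds_cat.
Qed.

Lemma legal_from_uniq D s : legal_from D s -> uniq s.
Proof.
have notin_later D' s' x : legal_from D' s' -> x \in s' -> ~~ (cnbhd e x \subset D').
  elim: s' D' => [|v s' IHs] D' //= /andP[new ls]; rewrite inE => /orP[/eqP->|xs].
    by rewrite setD_eq0 in new.
  by apply: contra (IHs _ ls xs) => /subset_trans; apply; apply: subsetUl.
elim: s D => [|v s IHs] D //= /andP[_ ls]; rewrite (IHs _ ls) andbT.
by apply/negP => /(notin_later _ _ _ ls); rewrite subsetUr.
Qed.

Lemma legal_from_flatten (A : Type) (f : A -> seq T) (S : seq A) :
    (forall p x q, S = p ++ x :: q -> legal_from (cnbhds (flatten (map f p))) (f x)) ->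
  legal_from set0 (flatten (map f S)).
Proof.
move=> Hf; suff gen t p : S = p ++ t ->
    legal_from (cnbhds (flatten (map f p))) (flatten (map f t)).
  by rewrite -cnbhds_nil; apply: (gen S [::]).
elim: t p => [|x t IHt] p //= SE; rewrite legal_from_cat (Hf _ _ _ SE) /=.
have := IHt (rcons p x); rewrite -cats1 -catA => /(_ SE).
by rewrite map_cat flatten_cat cnbhds_cat /= cats0.
Qed.

Lemma legal_from_map_filter (A : Type) (P : pred A) (f : A -> T) (S : seq A) :
    (forall p x q, S = p ++ x :: q -> P x ->
       cnbhd e (f x) :\: cnbhds (map f (filter P p)) != set0) ->
  legal_from set0 (map f (filter P S)).
Proof.
have flat s :
    map f (filter P s) = flatten (map (fun x => if P x then [:: f x] else [::]) s).
  by elim: s => //= x s IHs; case: (P x); rewrite /= IHs.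
move=> Hf; rewrite flat; apply: legal_from_flatten => p x q SE.
by case Px: (P x) => //=; rewrite andbT -flat; apply: Hf SE Px.
Qed.

Lemma all_pnS_cat p s : uniq (p ++ s) ->
  all (fun v => pnS e (p ++ s) v != set0) s = legal_from (cnbhds p) s.
Proof.
elim: s p => [|v s IHs] p //= U.
have := IHs (rcons p v); rewrite -cats1 -catA /= => -> //.
by rewrite cnbhds_cat cnbhds_seq1 /pnS take_index_cat_cons ?(uniq_cat_cons_notin U).
Qed.

Lemma dominatingP s : reflect (forall x, x \in cnbhds s) (dominating e (mem s)).
Proof.
apply: (iffP forallP) => dom_s x.
  by case/existsP: (dom_s x) => v /andP[vs xv]; rewrite mem_cnbhds; apply/hasP; exists v.
move: (dom_s x); rewrite mem_cnbhds => /hasP[v vs xv].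
by apply/existsP; exists v; rewrite vs.
Qed.

Lemma legalE s : legal e s = legal_from set0 s && dominating e (mem s).
Proof.
rewrite /legal; have [U|NU] /= := boolP (uniq s).
  by have := all_pnS_cat (p := [::]) U; rewrite cnbhds_nil andbC => ->.
by apply/esym/negbTE; apply: contra NU => /andP[/legal_from_uniq].
Qed.

Lemma legal_uniq s : legal e s -> uniq s.
Proof. by case/and3P. Qed.

Lemma in_IS s v : (v \in IS e s) = (v \in s) && (v \notin cnbhds (take (index v s) s)).
Proof. by rewrite inE /pnS in_setD cnbhd_refl andbT. Qed.

Lemma IS_subset_cat s t : IS e s \subset IS e (s ++ t).
Proof.
apply/subsetP => v; rewrite !in_IS mem_cat => /andP[vs].
by rewrite vs index_cat vs takel_cat // ltnW // index_mem.
Qed.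

Lemma independent_IS s : symmetric e -> irreflexive e -> independent e (IS e s).
Proof.
move=> e_sym e_irr.
have ordered x y : x \in IS e s -> y \in IS e s -> index x s < index y s -> ~~ e x y.
  rewrite !in_IS => /andP[xs _] /andP[ys yN] lt; apply: contra yN => exy.
  by rewrite mem_cnbhds; apply/hasP; exists x; rewrite ?in_take ?in_cnbhd ?exy ?orbT.
apply/forallP => x; apply/implyP => xI; apply/forallP => y; apply/implyP => yI.
have xs : x \in s by move: xI; rewrite in_IS => /andP[].
have ys : y \in s by move: yI; rewrite in_IS => /andP[].
case: (ltngtP (index x s) (index y s)) => [lt|gt|eq_xy]; first exact: ordered.
  by rewrite e_sym; apply: ordered.
by rewrite (index_inj x xs ys eq_xy) e_irr.
Qed.

Lemma uniq_size_lt_card (s : seq T) : uniq s -> size s < #|T|.+1.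
Proof. by move=> U; rewrite ltnS -(card_uniqP U) max_card. Qed.

Lemma legal_from_extend (w : T -> nat) s : legal_from set0 s -> exists2 s', legal e s' &
  size s + \sum_(v in IS e s) w v <= size s' + \sum_(v in IS e s') w v.
Proof.
have [n] := ubnP (#|T| - size s); elim: n s => // n IHn s; rewrite ltnS => bound ls.
case: (pickP [pred x | x \notin cnbhds s]) => [x /= xN | all_dom]; last first.
  by exists s => //; rewrite legalE ls; apply/dominatingP => x; apply/negbFE/all_dom.
have ls1 : legal_from set0 (s ++ [:: x]).
  rewrite legal_from_cat ls /= andbT; apply/set0Pn; exists x.
  by rewrite in_setD cnbhd_refl set0U xN.
have := uniq_size_lt_card (legal_from_uniq ls1); rewrite size_cat /= => lt.
have [|s' ls' le_s'] := IHn (s ++ [:: x]) _ ls1.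
  by rewrite size_cat /=; move: bound lt; set c := #|T|; lia.
exists s' => //; apply: leq_trans le_s'; rewrite size_cat /= leq_add ?leq_addr //.
rewrite [X in X <= _]big_mkcond [X in _ <= X]big_mkcond leq_sum // => v _.
by case: ifP => // /(subsetP (IS_subset_cat s [:: x])) ->.
Qed.

Lemma legal_size_le_gamma s : legal e s -> size s <= gamma_gr e.
Proof.
move=> ls; have lt := uniq_size_lt_card (legal_uniq ls).
by apply: (@leq_bigmax_cond _ _ _ (Ordinal lt)); apply/existsP; exists (in_tuple s).
Qed.

Lemma legal_size_le_gammaI s : legal e s -> size s <= gamma_grI e (IS e s).
Proof.
move=> ls; have lt := uniq_size_lt_card (legal_uniq ls).
apply: (@leq_bigmax_cond _ _ _ (Ordinal lt)).
by apply/existsP; exists (in_tuple s); rewrite ls eqxx.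
Qed.

Lemma LI_nonempty_IS s : legal e s -> LI_nonempty e (IS e s).
Proof.
move=> ls; have lt := uniq_size_lt_card (legal_uniq ls).
by apply/existsP; exists (Ordinal lt); apply/existsP; exists (in_tuple s); rewrite ls eqxx.
Qed.

Lemma gamma_gr_attained : exists2 s, legal e s & size s = gamma_gr e.
Proof.
have [s ls _] := legal_from_extend (fun=> 0) (s := [::]) isT.
have lt := uniq_size_lt_card (legal_uniq ls).
have ex_s : [exists t : (Ordinal lt).-tuple T, legal e t].
  by apply/existsP; exists (in_tuple s).
rewrite /gamma_gr (bigmax_eq_arg (Ordinal lt)) //.
by case: arg_maxnP => // i /existsP[t t_legal] _; exists t; rewrite ?size_tuple.
Qed.

Lemma gamma_gr_gt0 : 0 < #|T| -> 0 < gamma_gr e.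
Proof.
case/card_gt0P => x _; have [[|v s] ls <-] // := gamma_gr_attained.
by move: ls; rewrite legalE => /andP[_ /dominatingP/(_ x)]; rewrite cnbhds_nil inE.
Qed.

Lemma gamma_grI_attained I : LI_nonempty e I ->
  exists s, [/\ legal e s, IS e s = I & size s = gamma_grI e I].
Proof.
case/existsP => n0 LIn0; rewrite /gamma_grI (bigmax_eq_arg n0) //.
by case: arg_maxnP => // i /existsP[t /andP[lt /eqP ItI]] _; exists t; rewrite size_tuple.
Qed.

End LegalSequences.

Section Join.
Variables (T : finType) (e : rel T) (Tv : T -> finType) (ev : forall v, rel (Tv v)).
Hypothesis e_irr : irreflexive e.
Variable d : forall v, Tv v.
Local Notation K := {v : T & Tv v}.
Local Notation eH := (join_rel e ev).
Local Notation NH := (cnbhd eH).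

Lemma tag_cnbhd_join (x z : K) : z \in NH x -> tag z \in cnbhd e (tag x).
Proof.
rewrite !in_cnbhd /join_rel => /orP[/eqP->|]; first by rewrite eqxx.
by case: (tag x =P tag z) => [E _|_ exz]; [rewrite E eqxx | rewrite exz orbT].
Qed.

Lemma cnbhd_join_adj (x z : K) : e (tag x) (tag z) -> z \in NH x.
Proof.
move=> exz; have nxz : tag x != tag z by apply: contraTneq exz => ->; rewrite e_irr.
by rewrite in_cnbhd /join_rel (negbTE nxz) exz orbT.
Qed.

Lemma cnbhd_join_Tagged v (a b : Tv v) :
  (Tagged Tv b \in NH (Tagged Tv a)) = (b \in cnbhd (@ev v) a).
Proof. by rewrite !in_cnbhd /join_rel /= eqxx tagged_asE eq_Tagged. Qed.

Lemma legal_from_Tagged v (s : seq (Tv v)) (D : {set K}) :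
  legal_from (@ev v) [set y | Tagged Tv y \in D] s -> legal_from eH D (map (Tagged Tv) s).
Proof.
elim: s D => [|y s IHs] D //= /andP[/set0Pn[y' y'new] ls]; apply/andP; split.
  move: y'new; rewrite in_setD inE => /andP[y'ND y'y]; apply/set0Pn; exists (Tagged Tv y').
  by rewrite in_setD cnbhd_join_Tagged y'y andbT.
apply: IHs; congr (legal_from _ _ _): ls; apply/setP => z.
by rewrite [RHS]inE !in_setU cnbhd_join_Tagged inE.
Qed.

Section LowerBound.
Variables (I : {set T}) (sig : forall v, seq (Tv v)).

Definition join_block v : seq K :=
  if v \in I then map (Tagged Tv) (sig v) else [:: Tagged Tv (d v)].

Local Notation blocks p := (flatten (map join_block p)).

Lemma tag_join_block v x : x \in join_block v -> tag x = v.
Proof. by rewrite /join_block; case: ifP => _ => [/mapP[y _ ->]|/[!inE]/eqP->]. Qed.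

Lemma tag_cnbhds_blocks p z : z \in cnbhds eH (blocks p) -> tag z \in cnbhds e p.
Proof.
rewrite !mem_cnbhds => /hasP[x /flattenP[_ /mapP[u up ->] xu] zx].
by apply/hasP; exists u; rewrite // -(tag_join_block xu) tag_cnbhd_join.
Qed.

Hypothesis sig_legal : forall v, legal (@ev v) (sig v).

Lemma join_block_tag_exists u : exists2 x, x \in join_block u & tag x = u.
Proof.
rewrite /join_block; case: ifP => _; last by exists (Tagged Tv (d u)); rewrite ?inE.
case E: (sig u) => [|y s]; last by exists (Tagged Tv y); rewrite //= inE eqxx.
have := sig_legal u; rewrite E legalE => /andP[_ /dominatingP/(_ (d u))].
by rewrite cnbhds_nil inE.
Qed.

Lemma mem_blocks p u x : u \in p -> x \in join_block u -> x \in blocks p.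
Proof. by move=> up xu; apply/flattenP; exists (join_block u); rewrite ?map_f. Qed.

Variable S : seq T.
Hypotheses (S_legal : legal e S) (S_IS : IS e S = I).

Lemma legal_from_blocks : legal_from eH set0 (blocks S).
Proof.
apply: legal_from_flatten => p v q SE.
have vNp : v \notin p by move: (legal_uniq S_legal); rewrite SE => /uniq_cat_cons_notin.
have vI : (v \in I) = (v \notin cnbhds e p).
  by rewrite -S_IS in_IS SE take_index_cat_cons // mem_cat_cons.
rewrite /join_block vI; case: ifPn => [vNN|/negbNE vN].
  apply: legal_from_Tagged.
  have -> : [set y : Tv v | Tagged Tv y \in cnbhds eH (blocks p)] = set0.
    by apply/setP => y; rewrite !inE; apply: contraNF vNN => /tag_cnbhds_blocks.
  by move: (sig_legal v); rewrite legalE => /andP[].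
have := S_legal; rewrite legalE SE legal_from_cat /= set0U.
case/andP=> /andP[_ /andP[/set0Pn[w] + _]] _; rewrite in_setD => /andP[wN wv].
have evw : e v w.
  by move: wv; rewrite in_cnbhd => /orP[/eqP wv|//]; rewrite wv vN in wN.
rewrite /= andbT; apply/set0Pn; exists (Tagged Tv (d w)).
by rewrite in_setD cnbhd_join_adj // andbT; apply: contraNN wN => /tag_cnbhds_blocks.
Qed.

Lemma dominating_blocks : dominating eH (mem (blocks S)).
Proof.
apply/dominatingP => -[w y]; rewrite mem_cnbhds.
have adj_block u : u \in S -> e u w -> has (fun x => Tagged Tv y \in NH x) (blocks S).
  move=> uS euw; have [x xu xt] := join_block_tag_exists u.
  by apply/hasP; exists x; [exact: mem_blocks xu | apply: cnbhd_join_adj; rewrite xt].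
move: S_legal; rewrite legalE => /andP[_ /dominatingP/(_ w)].
rewrite mem_cnbhds => /hasP[v vS]; rewrite in_cnbhd => /orP[/eqP wv|];
  last exact: adj_block.
subst w; case vI: (v \in I).
  move: (sig_legal v); rewrite legalE => /andP[_ /dominatingP/(_ y)].
  rewrite mem_cnbhds => /hasP[x xs yx]; apply/hasP; exists (Tagged Tv x).
    by apply: (mem_blocks vS); rewrite /join_block vI map_f.
  by rewrite cnbhd_join_Tagged.
move: vI; rewrite -S_IS in_IS vS /= mem_cnbhds => /negbFE/hasP[u uS vu].
have lt_uv : index u S < index v S by rewrite -in_take // (mem_take uS).
have euv : e u v.
  by move: vu; rewrite in_cnbhd => /orP[/eqP vu|//]; rewrite vu ltnn in lt_uv.
exact: adj_block (mem_take uS) euv.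
Qed.

Lemma size_blocks :
  size (blocks S) = \sum_(v <- S) (if v \in I then size (sig v) else 1).
Proof.
rewrite size_flatten /shape sumnE !big_map; apply: eq_bigr => v _.
by rewrite /join_block; case: ifP => _; rewrite ?size_map.
Qed.

End LowerBound.

Lemma gamma_join_ge I : LI_nonempty e I ->
  gamma_grI e I + \sum_(v in I) (gamma_gr (@ev v)).-1 <= gamma_gr eH.
Proof.
move=> /gamma_grI_attained[S [S_legal S_IS <-]].
have [sig sig_legal sig_size] := fin_all_exists2 (fun v => gamma_gr_attained (@ev v)).
have blocks_legal : legal eH (flatten (map (join_block I sig) S)).
  by rewrite legalE legal_from_blocks ?dominating_blocks.
apply: leq_trans (legal_size_le_gamma blocks_legal); rewrite size_blocks.
have gt0 v : 0 < gamma_gr (@ev v) by apply/gamma_gr_gt0/card_gt0P; exists (d v).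
have block_size v : (if v \in I then size (sig v) else 1) =
                   1 + (if v \in I then (gamma_gr (@ev v)).-1 else 0).
  by case: ifP => _; rewrite ?addn0 // sig_size add1n prednK.
rewrite (eq_bigr _ (fun v _ => block_size v)) big_split /= sum1_size leq_add2l.
rewrite (big_uniq _ (legal_uniq S_legal)).
rewrite [X in X <= _]big_mkcond [X in _ <= X]big_mkcond leq_sum // => v _.
by case: ifP => // vI; rewrite -S_IS in_IS in vI; case/andP: vI => ->.
Qed.

Section UpperBound.
Hypothesis e_sym : symmetric e.
Variable S : seq K.
Hypothesis S_legal : legal eH S.
Local Notation PN := (pnS eH S).

Definition before (y x : K) := (y \in S) && (index y S < index x S).

Lemma notin_prefix p x q : S = p ++ x :: q -> x \notin p.
Proof. by move=> SE; move: (legal_uniq S_legal); rewrite SE => /uniq_cat_cons_notin. Qed.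

Lemma before_take y x : (y \in take (index x S) S) = before y x.
Proof.
rewrite /before; have [yS|yNS] := boolP (y \in S); first by rewrite in_take.
by apply/negbTE; apply: contra yNS; apply: mem_take.
Qed.

Lemma before_cat p x q y : S = p ++ x :: q -> before y x = (y \in p).
Proof.
move=> SE; rewrite -before_take.
by rewrite [in index _ _]SE [in take _ _]SE take_index_cat_cons ?(notin_prefix SE).
Qed.

Lemma before_mem y x : before y x -> y \in S.
Proof. by case/andP. Qed.

Lemma before_trans a b c : before a b -> before b c -> before a c.
Proof. by rewrite /before => /andP[-> ab] /andP[_ bc]; apply: ltn_trans bc. Qed.

Lemma before_total a b : a \in S -> b \in S -> a != b -> before a b \/ before b a.
Proof.
move=> aS bS ab; rewrite /before aS bS /=.
case: ltngtP => [|| iab]; [by left | by right |].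
by rewrite (index_inj a aS bS iab) eqxx in ab.
Qed.

Lemma PNP z x : z \in PN x <-> z \in NH x /\ forall y, before y x -> z \notin NH y.
Proof.
rewrite /pnS in_setD mem_cnbhds andbC; split.
  by case/andP=> zx /hasPn zN; split=> // y; rewrite -before_take; apply: zN.
by case=> zx zN; rewrite zx; apply/hasPn => y; rewrite before_take; apply: zN.
Qed.

Lemma PN_nonadj x z y : z \in PN x -> before y x -> ~~ e (tag y) (tag z).
Proof. by case/PNP=> _ zN /zN; apply: contra; apply: cnbhd_join_adj. Qed.

Lemma PN_tag x z : z \in PN x -> tag z \in cnbhd e (tag x).
Proof. by case/PNP=> /tag_cnbhd_join. Qed.

Lemma PN_adj x z : z \in PN x -> tag z != tag x -> e (tag x) (tag z).
Proof. by move/PN_tag; rewrite in_cnbhd => /orP[/eqP->|//]; rewrite eqxx. Qed.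

Definition phi x : T :=
  if [exists z, (z \in PN x) && (tag z == tag x)] then tag x
  else if [pick z in PN x] is Some z then tag z else tag x.

Lemma phi_footprint x : x \in S -> exists2 z, z \in PN x & tag z = phi x.
Proof.
move=> xS; rewrite /phi; case: existsP => [[z /andP[zP /eqP zx]]|_]; first by exists z.
case: pickP => [z zP|PN0]; first by exists z.
move: S_legal => /and3P[_ _ /allP/(_ x xS)/set0Pn[z zP]].
by rewrite PN0 in zP.
Qed.

Lemma phi_self x z : z \in PN x -> tag z = tag x -> phi x = tag x.
Proof.
move=> zP zx; rewrite /phi; case: existsP => // [[]].
by exists z; rewrite zP zx eqxx.
Qed.

Lemma first_in_copy y z w : z \in PN y -> before w y -> tag w = tag z ->
  exists x, [/\ before x y, tag x = tag z & phi x = tag z].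
Proof.
move=> zP wy wz; have wS := before_mem wy.
have [|p [x [q [SE /eqP xz Np]]]] := @split_first _ (fun a : K => tag a == tag z) S.
  by apply/hasP; exists w; rewrite ?wz.
(* The first vertex of [S] in the copy of [tag z] footprints itself. *)
have wNp : w \notin p by apply: contraNN Np => wp; apply/hasP; exists w; rewrite ?wz.
have xS : x \in S by rewrite SE mem_cat_cons.
have xy : before x y.
  have ix : index x S = size p.
    by rewrite SE index_cat (negbTE (notin_prefix SE)) /= eqxx addn0.
  have iw : size p <= index w S by rewrite SE index_cat (negbTE wNp) leq_addr.
  by rewrite /before xS ix; case/andP: wy => _; apply: leq_ltn_trans iw.
exists x; split => //; rewrite -xz; apply: (phi_self (z := x)) => //; apply/PNP.
split=> [|y']; first exact: cnbhd_refl.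
rewrite (before_cat _ SE) => y'p; apply/negP => /tag_cnbhd_join.
rewrite in_cnbhd => /orP[/eqP xy'|].
  by move: Np => /hasPn/(_ y' y'p); rewrite -xy' xz eqxx.
by rewrite xz; apply/negP/(PN_nonadj zP); rewrite (before_trans _ xy) ?(before_cat _ SE).
Qed.

Lemma phi_adj x : x \in S -> phi x != tag x -> e (tag x) (phi x).
Proof. by move=> /phi_footprint[z zP <-]; apply: PN_adj. Qed.

Definition phi_new x := [forall y, before y x ==> (phi y != phi x)].

Lemma phi_new_first p x q :
  S = p ++ x :: q -> ~~ has (fun y => phi y == phi x) p -> phi_new x.
Proof.
move=> SE /hasPn Np; apply/forallP => y; apply/implyP.
by rewrite (before_cat _ SE) => /Np.
Qed.

Lemma phi_new_private x y :
  x \in S -> phi_new x -> before y x -> phi x \notin cnbhd e (tag y).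
Proof.
move=> xS /forallP xnew yx; have [z zP zx] := phi_footprint xS; rewrite -zx.
rewrite in_cnbhd negb_or (PN_nonadj zP yx) andbT; apply/eqP => zy.
have [x0 [x0x _ phix0]] := first_in_copy zP yx (esym zy).
by move: (xnew x0); rewrite x0x phix0 zx eqxx.
Qed.

Definition new_tags := map tag (filter phi_new S).

Lemma legal_from_new_tags : legal_from e set0 new_tags.
Proof.
apply: legal_from_map_filter => p x q SE xnew.
have xS : x \in S by rewrite SE mem_cat_cons.
have [z zP zx] := phi_footprint xS.
apply/set0Pn; exists (phi x); rewrite in_setD -{2}zx (PN_tag zP).
rewrite andbT mem_cnbhds; apply/hasPn => u /mapP[y]; rewrite mem_filter => /andP[_ yp] ->.
by apply: phi_new_private; rewrite ?(before_cat _ SE).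
Qed.

Lemma tag_in_IS_new_tags x :
  x \in S -> phi_new x -> phi x = tag x -> tag x \in IS e new_tags.
Proof.
move=> xS xnew phix; have [p [q SE]] := split_mem xS.
have new_tagsE :
    new_tags = map tag (filter phi_new p) ++ tag x :: map tag (filter phi_new q).
  by rewrite /new_tags SE filter_cat /= xnew map_cat.
have := legal_from_uniq legal_from_new_tags.
rewrite new_tagsE => /uniq_cat_cons_notin xNnew.
rewrite in_IS take_index_cat_cons //.
rewrite mem_cat_cons mem_cnbhds /=; apply/hasPn => u /mapP[y].
rewrite mem_filter => /andP[_ yp] ->; rewrite -phix.
by apply: phi_new_private; rewrite ?(before_cat _ SE).
Qed.

Lemma phi_class2_in_IS_new_tags t a b :
  a \in S -> b \in S -> a != b -> phi a = t -> phi b = t -> t \in IS e new_tags.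
Proof.
move=> aS bS ab phia phib.
have [x0 [x0S x0t phix0]] : exists x0, [/\ x0 \in S, tag x0 = t & phi x0 = t].
  wlog ba : a b aS bS ab phia phib / before a b.
    by move=> W; case: (before_total aS bS ab) => ?; [apply: (W a b) | apply: (W b a)];
      rewrite // eq_sym.
  have [zb zbP zbt] := phi_footprint bS; rewrite phib in zbt.
  have [at_|nat] := eqVneq (tag a) t.
    have [x0 [x0b x0t phix0]] := first_in_copy zbP ba (etrans at_ (esym zbt)).
    by exists x0; rewrite x0t phix0 zbt (before_mem x0b).
  have eat : e (tag a) t by rewrite -phia phi_adj // phia eq_sym.
  by move: (PN_nonadj zbP ba); rewrite zbt eat.
have [|p [x1 [q [SE /eqP phix1 Np]]]] := @split_first _ (fun y => phi y == t) S.
  by apply/hasP; exists x0; rewrite ?phix0.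
have x1S : x1 \in S by rewrite SE mem_cat_cons.
have x1new : phi_new x1 by apply: (phi_new_first SE); rewrite phix1.
suff x1t : tag x1 = t by rewrite -x1t tag_in_IS_new_tags ?phix1.
apply/eqP; apply: contraT => x1Nt.
have [z0 z0P z0t] := phi_footprint x0S; rewrite phix0 in z0t.
have x10 : x1 != x0 by apply: contraNneq x1Nt => ->; rewrite x0t eqxx.
case: (before_total x1S x0S x10) => [x1x0|].
  have ex1t : e (tag x1) t by rewrite -phix1 phi_adj // phix1 eq_sym.
  by move: (PN_nonadj z0P x1x0); rewrite z0t ex1t.
by rewrite (before_cat _ SE) => x0p; move: Np => /hasPn/(_ x0 x0p); rewrite phix0 eqxx.
Qed.

(* Used only when [phi x = t]: then [x] lies in G_t or footprints a vertex of
   G_t, so the default [d t] is never returned. *)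
Definition proj t (x : K) : Tv t :=
  if tag x == t then tagged_as (Tagged Tv (d t)) x
  else odflt (d t) [pick y : Tv t | Tagged Tv y \in PN x].

Lemma proj_footprint t x : x \in S -> phi x = t ->
  exists2 y, y \in cnbhd (@ev t) (proj t x) & Tagged Tv y \in PN x.
Proof.
move=> xS phix; have [[u y] zP /= zt] := phi_footprint xS; rewrite phix in zt; subst u.
rewrite /proj; case: eqP => [xt|_].
  move: zP; case: x {xS phix} xt => u y0 /= ut; subst u; rewrite tagged_asE => zP.
  by exists y => //; rewrite -cnbhd_join_Tagged; case/PNP: zP.
case: pickP => [y' y'P|PN0]; first by exists y' => //; apply: cnbhd_refl.
by move: (PN0 y); rewrite zP.
Qed.

Lemma legal_from_proj t :
  legal_from (@ev t) set0 (map (proj t) (filter (fun x => phi x == t) S)).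
Proof.
apply: legal_from_map_filter => p x q SE /eqP phix.
have xS : x \in S by rewrite SE mem_cat_cons.
have [y yx yP] := proj_footprint xS phix.
apply/set0Pn; exists y; rewrite in_setD yx andbT mem_cnbhds.
apply/hasPn => u /mapP[a]; rewrite mem_filter => /andP[/eqP phia ap] ->.
have ax : before a x by rewrite (before_cat _ SE).
have [at_|nat] := eqVneq (tag a) t.
  case/PNP: yP => _ /(_ a ax); case: a {ap phia ax} at_ => w ya /= wt; subst w.
  by rewrite /proj /= eqxx tagged_asE cnbhd_join_Tagged.
have eat : e (tag a) t by rewrite -phia phi_adj ?(before_mem ax) // phia eq_sym.
by move: (PN_nonadj yP ax); rewrite /= eat.
Qed.

Lemma count_phi_le_gamma t : count (fun x => phi x == t) S <= gamma_gr (@ev t).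
Proof.
have [s s_legal le_s] := legal_from_extend (fun=> 0) (legal_from_proj t).
rewrite !big1 // !addn0 size_map size_filter in le_s.
exact: leq_trans le_s (legal_size_le_gamma s_legal).
Qed.

Lemma count_phi_le t : count (fun x => phi x == t) S <=
  (t \in map phi S) + (if t \in IS e new_tags then (gamma_gr (@ev t)).-1 else 0).
Proof.
have [c0|] := posnP (count (fun x => phi x == t) S); first by rewrite c0.
rewrite -has_count => /hasP[x xS /eqP phix]; rewrite -phix map_f // phix.
have [c1|c2] := leqP (count (fun x => phi x == t) S) 1.
  exact: leq_trans c1 (leq_addr _ _).
have [a [b [aS bS ab phia phib]]] :
    exists a b, [/\ a \in S, b \in S, a != b, phi a = t & phi b = t].
  move: c2 (filter_uniq (fun x => phi x == t) (legal_uniq S_legal)); rewrite -size_filter.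
  have mf y : (y \in filter (fun x => phi x == t) S) = (phi y == t) && (y \in S).
    exact: mem_filter.
  case: (filter _ S) mf => [|a [|b r]] //= mf _ /andP[abr _].
  have /andP[/eqP phia aS] : (phi a == t) && (a \in S) by rewrite -mf inE eqxx.
  have /andP[/eqP phib bS] : (phi b == t) && (b \in S) by rewrite -mf !inE eqxx orbT.
  by exists a, b; split=> //; apply: contraNneq abr => ->; rewrite inE eqxx.
rewrite (phi_class2_in_IS_new_tags aS bS ab phia phib) add1n.
exact: leq_trans (count_phi_le_gamma t) (leqSpred _).
Qed.

Lemma phi_new_image : {subset map phi S <= map phi (filter phi_new S)}.
Proof.
move=> t tS; have [|p [x [q [SE /eqP phix Np]]]] := @split_first _ (fun y => phi y == t) S.
  by case/mapP: tS => x xS ->; apply/hasP; exists x.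
by rewrite -phix map_f // mem_filter (phi_new_first SE) ?phix // SE mem_cat inE eqxx orbT.
Qed.

Lemma size_le_new_tags :
  size S <= size new_tags + \sum_(t in IS e new_tags) (gamma_gr (@ev t)).-1.
Proof.
rewrite (size_eq_sum_count phi).
apply: (@leq_trans (\sum_t ((t \in map phi S) +
                           (if t \in IS e new_tags then (gamma_gr (@ev t)).-1 else 0)))).
  by apply: leq_sum => t _; apply: count_phi_le.
rewrite big_split /= -!big_mkcond /= sum1_card leq_add2r.
apply: (@leq_trans #|map phi (filter phi_new S)|).
  exact/subset_leq_card/subsetP/phi_new_image.
by rewrite (leq_trans (card_size _)) // /new_tags !size_map.
Qed.

Lemma join_legal_size_le : exists I, [/\ independent e I, LI_nonempty e I &
  size S <= gamma_grI e I + \sum_(v in I) (gamma_gr (@ev v)).-1].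
Proof.
have [S' S'_legal le_S'] :=
  legal_from_extend (fun t => (gamma_gr (@ev t)).-1) legal_from_new_tags.
exists (IS e S'); split; [exact: independent_IS | exact: LI_nonempty_IS |].
apply: leq_trans size_le_new_tags (leq_trans le_S' _).
by rewrite leq_add2r legal_size_le_gammaI.
Qed.

End UpperBound.
End Join.

Lemma sum_predn_card (T : finType) (A : {pred T}) (f : T -> nat) :
  (forall v, 0 < f v) -> \sum_(v in A) f v = \sum_(v in A) (f v).-1 + #|A|.
Proof.
move=> f_gt0; rewrite -sum1_card -big_split.
by apply: eq_bigr => v _; rewrite /= addn1 prednK.
Qed.

Import GRing.Theory.
Local Open Scope ring_scope.

Theorem theorem1 (T : finType) (e : rel T) (Tv : T -> finType)
  (ev : forall v, rel (Tv v))
  (esym : symmetric e) (eirr : irreflexive e)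
  (evsym : forall v, symmetric (ev v)) (evirr : forall v, irreflexive (ev v))
  (Tv_ne : forall v, (0 < #|Tv v|)%N) :
  let val (I : {set T}) : int :=
    (gamma_grI e I)%:Z + \sum_(v in I) (gamma_gr (ev v))%:Z - (#|I|)%:Z in
  (exists I : {set T}, [/\ independent e I, LI_nonempty e I &
       (gamma_gr (join_rel e ev))%:Z = val I]) /\
  (forall I : {set T}, independent e I -> LI_nonempty e I ->
       val I <= (gamma_gr (join_rel e ev))%:Z).
Proof.
move=> val.
have d v : Tv v := enum_val (Ordinal (Tv_ne v)).
have valE I : val I = (gamma_grI e I + \sum_(v in I) (gamma_gr (ev v)).-1)%N%:Z.
  rewrite /val -(big_morph Posz PoszD (erefl 0%:Z)).
  by rewrite (sum_predn_card _ (fun v => gamma_gr_gt0 (ev v) (Tv_ne v))) !PoszD addrA addrK.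
split; last by move=> I _ I_LI; rewrite valE lez_nat gamma_join_ge.
have [S S_legal S_size] := gamma_gr_attained (join_rel e ev).
have [I [I_ind I_LI le_S]] := join_legal_size_le eirr d esym S_legal.
exists I; split=> //; apply/eqP; rewrite valE eqz_nat eqn_leq gamma_join_ge // andbT.
by rewrite -S_size.
Qed.
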